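(* Let $\mathrm{k}$ be an infinite field and $\mathcal{A}$ a unital associative $\mathrm{k}$-algebra satisfying $\mathbf{H}_{\mathrm{s}}$. Let $V$ be an $n$-dimensional $\mathrm{k}$-subspace of $\mathcal{A}$ with $V\cap U(\mathcal{A})\neq\emptyset$, and let $\{x_1,\ldots,x_n\}$ be a basis of $V$ with $x_1$ invertible. Let $X=\{x_1+\alpha x_2+\cdots+\alpha^{n-1}x_n\mid\alpha\in\mathrm{k}\}$. Then: (1) any $n$ vectors of $X$ corresponding to $n$ distinct values of $\alpha$ form a basis of $V$; (2) infinitely many elements $x_1+\alpha x_2+\cdots+\alpha^{n-1}x_n$, $\alpha\in\mathrm{k}$, are invertible; (3) $X$ contains a basis of $V$ consisting of invertible elements.
   Context: $U(\mathcal{A})$ is the group of invertible elements. Hypothesis $\mathbf{H}_{\mathrm{s}}$: $\mathcal{A}$ is finite-dimensional over $\mathrm{k}$, or $\mathrm{k}\in\{\mathbb{R},\mathbb{C}\}$ and $\mathcal{A}$ is a Banach algebra over $\mathrm{k}$, or $\mathcal{A}$ is a finite product of field extensions of $\mathrm{k}$. *)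

From HB Require Import structures.
From mathcomp Require Import all_boot all_order all_algebra.
From mathcomp Require Import reals.
From mathcomp Require Import complex.

Set Implicit Arguments.
Unset Strict Implicit.
Unset Printing Implicit Defensive.

Import Order.TTheory GRing.Theory Num.Theory.
Local Open Scope ring_scope.

Definition infinite_type (T : eqType) : Prop :=
  forall s : seq T, exists x : T, x \notin s.

Definition fin_dim (k : fieldType) (A : lmodType k) : Prop :=
  exists s : seq A, forall a : A,
    exists c : 'I_(size s) -> k, a = \sum_(i < size s) c i *: s`_i.

(* Banach algebra structure on the k-algebra A, where k is identified with
   the normed field K (= R or C) through the field isomorphism phi. *)
Definition banach_norm (K : numFieldType) (k : fieldType) (phi : K -> k)
    (A : unitAlgType k) (N : A -> K) : Prop :=
  [/\ (forall a : A, 0 <= N a) /\ (forall a : A, N a = 0 -> a = 0),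
      forall a b : A, N (a + b) <= N a + N b,
      forall (c : K) (a : A), N (phi c *: a) = `|c| * N a,
      forall a b : A, N (a * b) <= N a * N b
    & forall u : nat -> A,
        (forall e : K, 0 < e -> exists M : nat, forall m p : nat,
            (M <= m)%N -> (M <= p)%N -> N (u m - u p) < e) ->
        exists l : A, forall e : K, 0 < e -> exists M : nat, forall m : nat,
            (M <= m)%N -> N (u m - l) < e].

Definition banach_over_R_or_C (k : fieldType) (A : unitAlgType k) : Prop :=
  exists R : realType,
    (exists phi : {rmorphism R -> k}, bijective phi /\
       exists N : A -> R, banach_norm phi N)
    \/
    (exists phi : {rmorphism R[i] -> k}, bijective phi /\
       exists N : A -> R[i], banach_norm phi N).

(* A is (isomorphic as a k-algebra to) a finite product of field extensions
   L_0 x ... x L_(m-1) of k: f i are the coordinate maps, which are k-algebra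
   morphisms (k acting on L_i through iota i), and together they form a
   bijection A -> prod_i L_i. *)
Definition finite_product_of_field_ext (k : fieldType) (A : unitAlgType k)
    : Prop :=
  exists (m : nat) (L : 'I_m -> fieldType)
         (iota : forall i, {rmorphism k -> L i})
         (f : forall i, {rmorphism A -> L i}),
    [/\ forall i (c : k) (a : A), f i (c *: a) = iota i c * f i a,
        forall a b : A, (forall i, f i a = f i b) -> a = b
      & forall y : (forall i, L i), exists a : A, forall i, f i a = y i].

Definition H_s (k : fieldType) (A : unitAlgType k) : Prop :=
  fin_dim A \/ banach_over_R_or_C A \/ finite_product_of_field_ext A.

Definition in_span (k : fieldType) (A : lmodType k) (m : nat)
    (x : 'I_m -> A) (v : A) : Prop :=
  exists c : 'I_m -> k, v = \sum_(i < m) c i *: x i.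

Definition lin_indep (k : fieldType) (A : lmodType k) (m : nat)
    (x : 'I_m -> A) : Prop :=
  forall c : 'I_m -> k, \sum_(i < m) c i *: x i = 0 -> forall i, c i = 0.

Definition is_basis_of (k : fieldType) (A : lmodType k) (V : A -> Prop)
    (m : nat) (y : 'I_m -> A) : Prop :=
  [/\ forall i, V (y i), lin_indep y & forall v, V v -> in_span y v].

Definition moment_vec (k : fieldType) (A : lmodType k) (n : nat)
    (x : 'I_n -> A) (alpha : k) : A :=
  \sum_(i < n) alpha ^+ i *: x i.

From HB Require Import structures.
From mathcomp Require Import all_boot all_order all_algebra.
From mathcomp Require Import reals complex.
From mathcomp Require Import ring lra.
From Stdlib Require Import Classical.
Import Order.TTheory GRing.Theory Num.Theory.
Local Open Scope ring_scope.
Set Implicit Arguments.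
Unset Strict Implicit.
Unset Printing Implicit Defensive.

(* The coordinates of [x_1 + a x_2 + ... + a^(n-1) x_n], for n distinct values
   of a, on the basis [x] form an invertible Vandermonde matrix; this is (1),
   and (3) follows from (1) and (2) by choosing n distinct good values of a.
   In a finite-dimensional algebra, the determinant of left multiplication by
   the moment vector is a polynomial in a which does not vanish at a = 0, as
   [x_1] is invertible; it thus has finitely many roots.  In a finite product
   of fields the same holds in each factor.  In a Banach algebra,
   [x_1^-1 (x_1 + a x_2 + ...)] is [1 - q] with [|q| <= 1/2] for a = 1/j,
   j large, and is inverted by the Neumann series of [q]. *)

Section MomentVectors.
Variables (k : fieldType) (A : lmodType k) (n : nat) (x : 'I_n -> A).

Lemma moment_vec0 (hn : (0 < n)%N) : moment_vec x 0 = x (Ordinal hn).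
Proof.
rewrite /moment_vec (bigD1 (Ordinal hn)) //= expr0 scale1r big1 ?addr0 // => l.
by rewrite expr0n -val_eqE /= => /negPf->; rewrite scale0r.
Qed.

Lemma sum_scale_moment_vec (alpha c : 'I_n -> k) :
  \sum_(j < n) c j *: moment_vec x (alpha j) =
  \sum_(i < n) (\sum_(j < n) alpha j ^+ i * c j) *: x i.
Proof.
rewrite /moment_vec; under eq_bigr do rewrite scaler_sumr.
rewrite exchange_big /=; apply: eq_bigr => i _.
by rewrite scaler_suml; apply: eq_bigr => j _; rewrite scalerA mulrC.
Qed.

Lemma moment_vec_basis (alpha : 'I_n -> k) :
  lin_indep x -> injective alpha ->
  is_basis_of (in_span x) (fun i => moment_vec x (alpha i)).
Proof.
move=> x_free alpha_inj; set W := Vandermonde n (\row_j alpha j).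
have WE i j : W i j = alpha j ^+ i by rewrite !mxE.
have W_unit : W \in unitmx.
  rewrite unitmxE det_Vandermonde unitfE; apply/prodf_neq0 => i _.
  apply/prodf_neq0 => j ij; rewrite !mxE subr_eq0; apply/eqP => /alpha_inj eij.
  by move: ij; rewrite eij ltnn.
split.
- by move=> i; exists (fun l => alpha i ^+ l).
- move=> c; rewrite sum_scale_moment_vec => /x_free c0.
  have /(congr1 (mulmx (invmx W))) : W *m \col_j c j = 0.
    by apply/matrixP => i z; rewrite !mxE -[RHS](c0 i); apply: eq_bigr => j _; rewrite !mxE.
  rewrite mulKmx // mulmx0 => /colP cE i.
  by have := cE i; rewrite !mxE.
- move=> v [c ->]; pose d := invmx W *m \col_j c j.
  exists (fun j => d j 0); rewrite sum_scale_moment_vec; apply: eq_bigr => i _.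
  have : (W *m d) i 0 = c i by rewrite mulKVmx // mxE.
  by rewrite mxE => <-; congr (_ *: _); apply: eq_bigr => j _; rewrite WE.
Qed.

End MomentVectors.

Definition cofinitely (T : eqType) (P : T -> Prop) : Prop :=
  exists b : seq T, forall a, a \notin b -> P a.

Definition infinitely_many (T : eqType) (P : T -> Prop) : Prop :=
  forall s : seq T, exists a, a \notin s /\ P a.

Lemma cofinitely_infinitely_many (T : eqType) (P : T -> Prop) :
  infinite_type T -> cofinitely P -> infinitely_many P.
Proof.
move=> T_inf [b bP] s; have [a] := T_inf (s ++ b).
by rewrite mem_cat negb_or => /andP[a_s ab]; exists a; split => //; apply: bP.
Qed.

Lemma cofinitely_all (T : eqType) (I : finType) (P : I -> T -> Prop) :
  (forall i, cofinitely (P i)) -> cofinitely (fun a => forall i, P i a).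
Proof.
move=> /fin_all_exists[b bP]; exists (flatten [seq b i | i <- enum I]) => a abI i.
apply: bP; apply: contra abI => abi.
by apply/flattenP; exists (b i) => //; apply: map_f; rewrite mem_enum.
Qed.

Lemma cofinitely_nonroot (k L : fieldType) (iota : {rmorphism k -> L}) (p : {poly L}) :
  p != 0 -> cofinitely (fun a => p.[iota a] != 0).
Proof.
move: {2}(size p) (leqnn (size p)) => m; elim: m p => [|m IH] p sz_p p0.
  by move: p0; rewrite -size_poly_eq0 -leqn0 sz_p.
case: (classic (exists a, root p (iota a))) => [[a pa]|no_root]; last first.
  by exists [::] => a _; apply/negP => pa; apply: no_root; exists a.
have [q pE] := factor_theorem _ _ pa.
have q0 : q != 0 by apply: contra p0; rewrite pE => /eqP->; rewrite mul0r.
have sz_q : (size q <= m)%N.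
  by rewrite -ltnS (leq_trans _ sz_p) // pE size_Mmonic ?monicXsubC // size_XsubC addn2.
have [b bq] := IH q sz_q q0; exists (a :: b) => z; rewrite inE negb_or => /andP[za zb].
rewrite pE hornerM hornerXsubC mulf_neq0 ?bq //.
by rewrite subr_eq0; apply: contra za => /eqP/fmorph_inj->.
Qed.

Lemma infinitely_many_eventually (T : eqType) (P : T -> Prop) (g : nat -> T) (J : nat) :
  injective g -> (forall j, (J <= j)%N -> P (g j)) -> infinitely_many P.
Proof.
move=> g_inj gP s; set js := iota J (size s).+1.
have [/hasP[j]|/hasPn js_in_s] := boolP (has (fun j => g j \notin s) js).
  by rewrite mem_iota => /andP[Jj _] gjs; exists (g j); split => //; apply: gP.
have sub : {subset map g js <= s} by move=> z /mapP[j /js_in_s /negPn gjs ->].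
have := uniq_leq_size (etrans (map_inj_uniq g_inj _) (iota_uniq J (size s).+1)) sub.
by rewrite size_map size_iota ltnn.
Qed.

Lemma infinitely_many_injective_family (T : eqType) (P : T -> Prop) :
  infinitely_many P ->
  forall m, exists alpha : 'I_m -> T, injective alpha /\ forall i, P (alpha i).
Proof.
move=> avoid m; have [a0 _] := avoid [::].
suff [t [sz_t t_uniq tP]] : exists t : seq T, [/\ size t = m, uniq t & forall a, a \in t -> P a].
  exists (fun i => nth a0 t i); split => [i j /eqP|i]; last by apply/tP/mem_nth; rewrite sz_t.
  by rewrite nth_uniq ?sz_t // => /eqP/val_inj.
elim: m => [|m [t [sz_t t_uniq tP]]]; first by exists [::].
have [a [a_t aP]] := avoid t; exists (a :: t); split; rewrite /= ?sz_t ?a_t //.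
by move=> z; rewrite inE => /orP[/eqP->|/tP].
Qed.

Lemma spanning_family_basis (k : fieldType) (A : lmodType k) (d : nat) (s : 'I_d -> A) :
  (forall a, in_span s a) ->
  exists d' (t : 'I_d' -> A), lin_indep t /\ forall a, in_span t a.
Proof.
elim: d s => [|d IH] s s_span; first by exists 0%N, s; split => // c _ [].
case: (classic (lin_indep s)) => [s_free|]; first by exists d.+1, s.
move=> s_dep; have [c [c0 [i ci]]] :
    exists c : 'I_d.+1 -> k, \sum_(j < d.+1) c j *: s j = 0 /\ exists i, c i != 0.
  apply: NNPP => no_rel; apply: s_dep => c c0 i; apply: NNPP => ci.
  by apply: no_rel; exists c; split => //; exists i; apply/eqP.
apply: (IH (fun j => s (lift i j))) => a; have [e ->] := s_span a.
have si : s i = - (c i)^-1 *: \sum_(j < d) c (lift i j) *: s (lift i j).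
  move: c0; rewrite (bigD1_ord i) //= => /eqP; rewrite addr_eq0 => /eqP cs.
  by rewrite scaleNr -scalerN -cs scalerA mulVf // scale1r.
exists (fun j => e (lift i j) - e i * (c i)^-1 * c (lift i j)).
rewrite (bigD1_ord i) //= si; under [RHS]eq_bigr do rewrite scalerBl.
rewrite sumrB addrC; congr (_ + _).
rewrite scalerA scaler_sumr -sumrN; apply: eq_bigr => j _.
by rewrite scalerA mulrN mulNr scaleNr.
Qed.

Lemma det_sum_expr_scale (k : fieldType) (d n : nat) (B : 'I_n -> 'M[k]_d) (alpha : k) :
  \det (\sum_(l < n) alpha ^+ l *: B l) =
  (\det (\matrix_(i, j) \sum_(l < n) B l i j *: 'X^l)).[alpha].
Proof.
rewrite -horner_evalE -det_map_mx; congr (\det _); apply/matrixP => i j.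
rewrite !mxE summxE rmorph_sum; apply: eq_bigr => l _.
by rewrite !mxE /= horner_evalE hornerZ hornerXn mulrC.
Qed.

Section FiniteDimensionalAlgebra.
Variables (k : fieldType) (A : unitAlgType k) (d : nat) (t : 'I_d -> A).
Hypotheses (t_free : lin_indep t) (t_span : forall a, in_span t a).

Definition vec (r : 'rV[k]_d) : A := \sum_(j < d) r 0 j *: t j.

Lemma vec_is_linear : linear vec.
Proof.
move=> c r1 r2; rewrite /vec scaler_sumr -big_split; apply: eq_bigr => j _.
by rewrite !mxE scalerDl scalerA.
Qed.

HB.instance Definition _ := GRing.isLinear.Build k 'rV[k]_d A *:%R vec vec_is_linear.

Lemma vec_inj : injective vec.
Proof.
move=> r1 r2 /eqP; rewrite -subr_eq0 -linearB => /eqP /t_free r0.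
by apply/rowP => j; apply/eqP; rewrite -subr_eq0; have := r0 j; rewrite !mxE => ->.
Qed.

Lemma vec_surj (a : A) : exists r, a == vec r.
Proof. by have [c ->] := t_span a; exists (\row_j c j); apply/eqP/eq_bigr => j _; rewrite mxE. Qed.

Definition coord (a : A) : 'rV[k]_d := xchoose (vec_surj a).

Lemma coordK (a : A) : vec (coord a) = a.
Proof. by apply/esym/eqP/(xchooseP (vec_surj a)). Qed.

Definition lmul_mx (a : A) : 'M[k]_d := \matrix_(i, j) coord (a * t i) 0 j.

Lemma vec_lmul_mx (a : A) (r : 'rV_d) : vec (r *m lmul_mx a) = a * vec r.
Proof.
rewrite /vec mulr_sumr; under eq_bigr do rewrite mxE scaler_suml.
rewrite exchange_big /=; apply: eq_bigr => i _.
rewrite -scalerAr -[a * t i]coordK scaler_sumr; apply: eq_bigr => j _.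
by rewrite mxE scalerA.
Qed.

Lemma vec_mulmx_ext (M1 M2 : 'M[k]_d) :
  (forall r, vec (r *m M1) = vec (r *m M2)) -> M1 = M2.
Proof. by move=> eqM; apply/row_matrixP => i; rewrite !rowE; apply/vec_inj/eqM. Qed.

Lemma lmul_mx_inj : injective lmul_mx.
Proof.
move=> a b /(congr1 (fun M => vec (coord 1 *m M))).
by rewrite !vec_lmul_mx coordK !mulr1.
Qed.

Lemma lmul_mx1 : lmul_mx 1 = 1%:M.
Proof. by apply: vec_mulmx_ext => r; rewrite vec_lmul_mx mul1r mulmx1. Qed.

Lemma lmul_mxM (a b : A) : lmul_mx (a * b) = lmul_mx b *m lmul_mx a.
Proof. by apply: vec_mulmx_ext => r; rewrite mulmxA !vec_lmul_mx mulrA. Qed.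

Lemma lmul_mx_sum_scale (n : nat) (c : 'I_n -> k) (y : 'I_n -> A) :
  lmul_mx (\sum_(l < n) c l *: y l) = \sum_(l < n) c l *: lmul_mx (y l).
Proof.
apply: vec_mulmx_ext => r; rewrite vec_lmul_mx mulmx_sumr mulr_suml linear_sum.
by apply: eq_bigr => l _; rewrite !linearZ /= vec_lmul_mx scalerAl.
Qed.

(* Left multiplication by [a] is an injective linear endomorphism of the
   finite-dimensional space [A], so a one-sided inverse is two-sided. *)
Lemma unitmx_lmul_mx (a : A) : (lmul_mx a \in unitmx) = (a \is a GRing.unit).
Proof.
apply/idP/idP => [aU | /unitrP[b [ba ab]]]; last first.
  have /mulmx1_unit[] // : lmul_mx a *m lmul_mx b = 1%:M by rewrite -lmul_mxM ba lmul_mx1.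
pose b := vec (coord 1 *m invmx (lmul_mx a)).
have ab : a * b = 1 by rewrite -vec_lmul_mx mulmxKV // coordK.
apply/unitrP; exists b; split => //; apply: lmul_mx_inj.
by rewrite lmul_mxM lmul_mx1; apply: mulmx1C; rewrite -lmul_mxM ab lmul_mx1.
Qed.

End FiniteDimensionalAlgebra.

Lemma fin_dim_moment_units (k : fieldType) (A : unitAlgType k)
    (n : nat) (hn : (0 < n)%N) (x : 'I_n -> A) :
  fin_dim A -> x (Ordinal hn) \is a GRing.unit ->
  cofinitely (fun alpha => moment_vec x alpha \is a GRing.unit).
Proof.
move=> [s s_span] x1_unit.
have [|d [t [t_free t_span]]] := @spanning_family_basis _ _ _ (fun i : 'I_(size s) => s`_i).
  by move=> a; have [c ->] := s_span a; exists c.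
pose p := \det (\matrix_(i, j) \sum_(l < n) lmul_mx t_span (x l) i j *: 'X^l).
have detE alpha : \det (lmul_mx t_span (moment_vec x alpha)) = p.[alpha].
  by rewrite /moment_vec lmul_mx_sum_scale //; apply: det_sum_expr_scale.
have p0 : p != 0.
  apply: contraTneq x1_unit => p0; rewrite -(moment_vec0 x hn) -(unitmx_lmul_mx t_free).
  by rewrite unitmxE detE p0 horner0 unitr0.
have [b bP] := cofinitely_nonroot (idfun : {rmorphism k -> k}) p0.
by exists b => alpha /bP; rewrite -(unitmx_lmul_mx t_free) unitmxE detE unitfE.
Qed.
Section FiniteProductOfFields.
Variables (k : fieldType) (A : unitAlgType k) (m : nat) (L : 'I_m -> fieldType).
Variables (iota : forall i, {rmorphism k -> L i}) (f : forall i, {rmorphism A -> L i}).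
Hypothesis fZ : forall i (c : k) (a : A), f i (c *: a) = iota i c * f i a.
Hypothesis f_inj : forall a b : A, (forall i, f i a = f i b) -> a = b.
Hypothesis f_surj : forall y : (forall i, L i), exists a : A, forall i, f i a = y i.

Lemma fprod_unit (a : A) : (forall i, f i a != 0) -> a \is a GRing.unit.
Proof.
move=> fa0; have [b fb] := f_surj (fun i => (f i a)^-1).
by apply/unitrP; exists b; split; apply: f_inj => i; rewrite rmorphM rmorph1 fb ?mulVf ?mulfV ?fa0.
Qed.

Lemma fprod_moment_vec (n : nat) (x : 'I_n -> A) i (alpha : k) :
  f i (moment_vec x alpha) = (\sum_(l < n) f i (x l) *: 'X^l).[iota i alpha].
Proof.
rewrite /moment_vec rmorph_sum horner_sum; apply: eq_bigr => l _.
by rewrite fZ hornerZ hornerXn rmorphXn mulrC.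
Qed.

Lemma fprod_moment_units (n : nat) (hn : (0 < n)%N) (x : 'I_n -> A) :
  x (Ordinal hn) \is a GRing.unit ->
  cofinitely (fun alpha => moment_vec x alpha \is a GRing.unit).
Proof.
move=> x1_unit.
have [b bP] : cofinitely (fun alpha => forall i, f i (moment_vec x alpha) != 0).
  apply: cofinitely_all => i.
  have p0 : \sum_(l < n) f i (x l) *: 'X^l != 0.
    apply: contraTneq (rmorph_unit (f i) x1_unit) => p0.
    by rewrite -(moment_vec0 x hn) fprod_moment_vec p0 horner0 unitr0.
  have [b bP] := cofinitely_nonroot (iota i) p0.
  by exists b => alpha /bP; rewrite fprod_moment_vec.
by exists b => alpha /bP /fprod_unit.
Qed.

End FiniteProductOfFields.

Section GeometricBounds.
Variables (R : archiRealFieldType) (rho : R).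
Hypotheses (rho_ge0 : 0 <= rho) (rho_le : rho <= 2^-1).

Lemma geometric_tail (p d : nat) :
  \sum_(j < d) rho ^+ (p + j) + 2 * rho ^+ (p + d) <= 2 * rho ^+ p.
Proof.
elim: d => [|d IH]; first by rewrite big_ord0 add0r addn0.
rewrite big_ord_recr /= addnS exprS; apply: le_trans IH.
have r_ge0 : 0 <= rho ^+ (p + d) := exprn_ge0 _ rho_ge0.
have : rho * rho ^+ (p + d) <= 2^-1 * rho ^+ (p + d) by rewrite ler_wpM2r.
lra.
Qed.

Lemma geometric_eventually_lt (e : R) : 0 < e ->
  exists M : nat, forall j, (M <= j)%N -> 2 * rho ^+ j < e.
Proof.
move=> e_gt0; exists (Num.bound (2 / e)) => j Mj.
have two_pow : 2 / e < 2 ^+ j.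
  apply: lt_le_trans (archi_boundP _) _; first by rewrite divr_ge0 // ltW.
  by rewrite -natrX ler_nat (leq_trans Mj) // ltnW // ltn_expl.
apply: le_lt_trans (_ : 2 * (2^-1) ^+ j < e).
  by rewrite ler_pM2l // lerXn2r // nnegrE invr_ge0.
by rewrite exprVn ltr_pdivrMr ?exprn_gt0 // mulrC -ltr_pdivrMr.
Qed.

End GeometricBounds.

Section BanachAlgebra.
Variables (R : archiRealFieldType) (k : fieldType) (phi : {rmorphism R -> k}).
Variables (A : unitAlgType k) (N : A -> R).
Hypothesis N_banach : banach_norm phi N.

Lemma bnorm_ge0 (a : A) : 0 <= N a.
Proof. by case: N_banach => -[]. Qed.

Lemma bnormD (a b : A) : N (a + b) <= N a + N b.
Proof. by case: N_banach. Qed.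

Lemma bnormZ (c : R) (a : A) : N (phi c *: a) = `|c| * N a.
Proof. by case: N_banach. Qed.

Lemma bnormM (a b : A) : N (a * b) <= N a * N b.
Proof. by case: N_banach. Qed.

Lemma bnorm0 : N 0 = 0.
Proof. by have := bnormZ 0 0; rewrite rmorph0 scaler0 normr0 mul0r. Qed.

Lemma bnormN (a : A) : N (- a) = N a.
Proof. by have := bnormZ (-1) a; rewrite rmorphN1 scaleN1r normrN normr1 mul1r. Qed.

Lemma bnorm_sum (I : Type) (r : seq I) (P : pred I) (F : I -> A) :
  N (\sum_(i <- r | P i) F i) <= \sum_(i <- r | P i) N (F i).
Proof.
elim/big_ind2: _ => [|a a' b b' ab bb'|//]; first by rewrite bnorm0.
by apply: le_trans (bnormD _ _) _; apply: lerD.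
Qed.

Lemma bnormX (a : A) (j : nat) : N (a ^+ j.+1) <= N a ^+ j.+1.
Proof.
elim: j => [|j IH]; first by rewrite !expr1.
rewrite exprSr [N a ^+ _]exprSr; apply: le_trans (bnormM _ _) _.
by rewrite ler_wpM2r // bnorm_ge0.
Qed.

Lemma bnorm_small_eq0 (a : A) : (forall e, 0 < e -> N a < e) -> a = 0.
Proof.
case: N_banach => -[_ N_eq0] _ _ _ _ small; apply: N_eq0.
by apply/eqP; rewrite eq_le bnorm_ge0 andbT leNgt; apply/negP => /small; rewrite ltxx.
Qed.

Lemma geometric_series_cauchy (q : A) : N q <= 2^-1 ->
  forall e, 0 < e -> exists M : nat, forall m p, (M <= m)%N -> (M <= p)%N ->
    N (\sum_(j < m) q ^+ j - \sum_(j < p) q ^+ j) < e.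
Proof.
move=> q_small e e_gt0; have q_ge0 := bnorm_ge0 q.
have [M small] := geometric_eventually_lt q_ge0 q_small e_gt0.
suff ordered m p : (M < p)%N -> (p <= m)%N ->
    N (\sum_(j < m) q ^+ j - \sum_(j < p) q ^+ j) < e.
  exists M.+1 => m p Mm Mp; case: (leqP p m) => [pm|/ltnW mp]; first exact: ordered.
  by rewrite -bnormN opprB; apply: ordered.
move=> Mp /subnKC <-; rewrite big_split_ord /= addrAC subrr add0r.
apply: le_lt_trans (bnorm_sum _ _ _) _.
apply: (@le_lt_trans _ _ (\sum_(j < m - p) N q ^+ (p + j))).
  apply: ler_sum => j _; rewrite -(prednK (leq_trans (ltn0Sn M) (leq_trans Mp (leq_addr j p)))).
  exact: bnormX.
have := geometric_tail q_ge0 q_small p (m - p).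
have := small p (ltnW Mp); have := exprn_ge0 (p + (m - p)) q_ge0; lra.
Qed.

Lemma neumann_unit (q : A) : N q <= 2^-1 -> (1 - q) \is a GRing.unit.
Proof.
move=> q_small; have q_ge0 := bnorm_ge0 q.
pose u m := \sum_(j < m) q ^+ j.
have [l u_to_l] : exists l, forall e, 0 < e -> exists M : nat,
    forall m, (M <= m)%N -> N (u m - l) < e.
  by case: N_banach => _ _ _ _; apply; apply: geometric_series_cauchy.
have uE m : (1 - q) * u m = 1 - q ^+ m /\ u m * (1 - q) = 1 - q ^+ m.
  elim: m => [|m [IHl IHr]]; first by rewrite /u big_ord0 mulr0 mul0r expr0 subrr.
  have -> : u m.+1 = u m + q ^+ m by rewrite /u big_ord_recr.
  split; [rewrite mulrDr IHl mulrBl mul1r -exprS | rewrite mulrDl IHr mulrBr mulr1 -exprSr];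
  by rewrite addrA subrK.
set C := N (1 - q); have C_ge0 : 0 <= C := bnorm_ge0 _.
have eq0 (T : A) : (forall m, N T <= C * N (u m.+1 - l) + N (q ^+ m.+1)) -> T = 0.
  move=> T_le; apply: bnorm_small_eq0 => e e_gt0.
  have eps_gt0 : 0 < e / (2 * (C + 1)) by rewrite divr_gt0 // mulr_gt0 // ltr_wpDl.
  have [M1 M1_le] := u_to_l _ eps_gt0.
  have [M2 M2_le] := geometric_eventually_lt q_ge0 q_small e_gt0.
  set m := maxn M1 M2; have := T_le m; have := bnormX q m.
  have := M2_le m.+1 (leq_trans (leq_maxr _ _) (leqnSn _)).
  have := M1_le m.+1 (leq_trans (leq_maxl _ _) (leqnSn _)).
  set v := N (u m.+1 - l); have v_ge0 : 0 <= v := bnorm_ge0 _.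
  have half : (C + 1) * (e / (2 * (C + 1))) = e / 2 by field; rewrite lt0r_neq0 ?ltr_wpDl.
  move=> /ltW /(ler_wpM2l (_ : 0 <= C + 1)) v_le; rewrite half in v_le.
  have : C * v <= (C + 1) * v by rewrite ler_wpM2r ?lerDl.
  lra.
apply/unitrP; exists l; split; apply/eqP; rewrite -subr_eq0; apply/eqP; apply: eq0 => m.
- have -> : l * (1 - q) - 1 = - ((u m.+1 - l) * (1 - q)) - q ^+ m.+1.
    by rewrite mulrBl (proj2 (uE _)) opprB opprB addrA addrAC addrK.
  by apply: le_trans (bnormD _ _) _; rewrite !bnormN lerD2r mulrC bnormM.
- have -> : (1 - q) * l - 1 = - ((1 - q) * (u m.+1 - l)) - q ^+ m.+1.
    by rewrite mulrBr (proj1 (uE _)) opprB opprB addrA addrAC addrK.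
  by apply: le_trans (bnormD _ _) _; rewrite !bnormN lerD2r bnormM.
Qed.

Lemma moment_vec_unit_near0 (n : nat) (hn : (0 < n)%N) (x : 'I_n -> A) (c : R) :
  x (Ordinal hn) \is a GRing.unit -> 0 <= c <= 1 ->
  c * \sum_(l < n) N ((x (Ordinal hn))^-1 * x l) <= 2^-1 ->
  moment_vec x (phi c) \is a GRing.unit.
Proof.
set i0 := Ordinal hn; set y := fun l => (x i0)^-1 * x l => x0_unit /andP[c_ge0 c_le1] cS.
set q := - \sum_(l < n | l != i0) phi c ^+ l *: y l.
have -> : moment_vec x (phi c) = x i0 * (1 - q).
  rewrite opprK /moment_vec (bigD1 i0) //= expr0 scale1r mulrDr mulr1 mulr_sumr.
  by congr (_ + _); apply: eq_bigr => l _; rewrite -scalerAr mulVKr.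
rewrite unitrMl //; apply: neumann_unit; apply: le_trans cS.
rewrite bnormN mulr_sumr; apply: le_trans (bnorm_sum _ _ _) _.
apply: le_trans (_ : \sum_(l < n | l != i0) c * N (y l) <= _); last first.
  by rewrite [X in _ <= X](bigD1 i0) //= lerDr mulr_ge0 ?bnorm_ge0.
apply: ler_sum => l l0; rewrite -rmorphXn bnormZ ger0_norm ?exprn_ge0 //.
rewrite ler_wpM2r ?bnorm_ge0 //; case: l l0 => -[|l] //= _ _.
by rewrite exprS ler_piMr ?exprn_ile1.
Qed.

Lemma banach_moment_units (n : nat) (hn : (0 < n)%N) (x : 'I_n -> A) :
  x (Ordinal hn) \is a GRing.unit ->
  infinitely_many (fun alpha => moment_vec x alpha \is a GRing.unit).
Proof.
move=> x0_unit; set S := \sum_(l < n) N ((x (Ordinal hn))^-1 * x l).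
have S_ge0 : 0 <= S by rewrite sumr_ge0 // => l _; apply: bnorm_ge0.
apply: (@infinitely_many_eventually _ _ (fun j => phi j.+1%:R^-1) (Num.bound (2 * S))).
  by move=> i j /fmorph_inj /invr_inj /eqP; rewrite eqr_nat => /eqP[].
move=> j Sj; apply: moment_vec_unit_near0 => //.
  by rewrite invr_ge0 ler0n invf_le1 ?ler1n ?ltr0n.
have : 2 * S < j.+1%:R.
  apply: lt_le_trans (archi_boundP _) _; first by rewrite mulr_ge0.
  by rewrite ler_nat ltnW.
rewrite -/S => S_lt; rewrite mulrC ler_pdivrMr ?ltr0n //; lra.
Qed.

End BanachAlgebra.

Lemma complex_ge0E (R : rcfType) (z : R[i]) : 0 <= z -> z = (complex.Re z)%:C%C.
Proof. by case: z => a b; rewrite lecE /= => /andP[/eqP-> _]. Qed.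

Lemma banach_norm_Re (R : rcfType) (k : fieldType) (phi : {rmorphism R[i] -> k})
    (A : unitAlgType k) (N : A -> R[i]) :
  banach_norm phi N -> banach_norm (phi \o real_complex R) (fun a => complex.Re (N a)).
Proof.
case=> -[N_ge0 N_eq0] ND NZ NM N_complete.
have NE a : N a = (complex.Re (N a))%:C%C by apply: complex_ge0E.
have ltRe (e : R[i]) : 0 < e -> 0 < complex.Re e by move=> e_gt0; rewrite -ltcR -complex_ge0E ?ltW.
split.
- by split => [a|a Na0]; [rewrite -ler0c -NE | apply: N_eq0; rewrite NE Na0].
- by move=> a b; have := ND a b; rewrite NE (NE a) (NE b) -raddfD lecR.
- move=> c a; apply: complexI; rewrite /= -NE NZ NE rmorphM /=.
  by rewrite normc_def /= expr0n /= addr0 sqrtr_sqr.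
- by move=> a b; have := NM a b; rewrite NE (NE a) (NE b) -rmorphM lecR.
move=> u u_cauchy; have [|l u_to_l] := N_complete u.
  move=> e e_gt0; have [M u_M] := u_cauchy _ (ltRe _ e_gt0); exists M => m p Mm Mp.
  by rewrite NE (complex_ge0E (ltW e_gt0)) ltcR; apply: u_M.
exists l => e e_gt0; have [|M u_M] := u_to_l e%:C%C; first by rewrite ltcR.
by exists M => m Mm; rewrite -ltcR -NE; apply: u_M.
Qed.

Lemma H_s_moment_units (k : fieldType) (A : unitAlgType k)
    (n : nat) (hn : (0 < n)%N) (x : 'I_n -> A) :
  infinite_type k -> H_s A -> x (Ordinal hn) \is a GRing.unit ->
  infinitely_many (fun alpha => moment_vec x alpha \is a GRing.unit).
Proof.
(* A ring morphism out of a field is injective. *)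
move=> k_inf [A_fin | [[R [[phi [_ [N N_banach]]] | [phi [_ [N N_banach]]]]] | A_prod]] x1_unit.
- exact: cofinitely_infinitely_many k_inf (fin_dim_moment_units A_fin x1_unit).
- by apply: (@banach_moment_units R _ phi _ N) x1_unit.
- apply: (@banach_moment_units R _ (phi \o real_complex R)) x1_unit.
  exact: banach_norm_Re N_banach.
- have [m [L [iota [f [fZ f_inj f_surj]]]]] := A_prod.
  exact: cofinitely_infinitely_many k_inf (fprod_moment_units fZ f_inj f_surj x1_unit).
Qed.

Theorem lemma2p7 (k : fieldType) (A : unitAlgType k)
    (k_inf : infinite_type k) (HsA : H_s A)
    (n : nat) (hn : (0 < n)%N) (x : 'I_n -> A)
    (x_indep : lin_indep x)
    (V_meets_units : exists v : A, in_span x v /\ v \is a GRing.unit)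
    (x1_unit : x (Ordinal hn) \is a GRing.unit) :
  let V := in_span x in
  let X := fun v : A => exists alpha : k, v = moment_vec x alpha in
  [/\ (forall alpha : 'I_n -> k, injective alpha ->
         is_basis_of V (fun i => moment_vec x (alpha i))),
      (forall s : seq k, exists alpha : k,
         alpha \notin s /\ moment_vec x alpha \is a GRing.unit)
    & (exists y : 'I_n -> A,
         (forall i, X (y i) /\ y i \is a GRing.unit) /\ is_basis_of V y)].
Proof.
move=> V X; have units := H_s_moment_units k_inf HsA x1_unit.
have [alpha [alpha_inj alpha_unit]] := infinitely_many_injective_family units n.
split => [beta beta_inj|//|]; first exact: moment_vec_basis.
exists (fun i => moment_vec x (alpha i)); split; last exact: moment_vec_basis.
by move=> i; split; [exists (alpha i) | apply: alpha_unit].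
Qed.
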